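(* Let $H$ be a graph with $t\geq 1$ vertices and $q$ edges, and assume that $H$ contains a 2-degenerate spanning subgraph $H'$ with $q'$ edges. Let $G$ be a graph with $n\geq 1$ vertices and minimum degree $\delta$, with $2\delta-n\geq q-q'+t-2$. Then $G$ contains a $(\leq 1)$-subdivision of $H$ as a subgraph.
   Context: All graphs are finite and simple. A graph is 2-degenerate if every non-empty subgraph of it has a vertex of degree at most 2. A subgraph $H'$ of $H$ is spanning if $V(H')=V(H)$. A $(\leq 1)$-subdivision of $H$ is a graph obtained from $H$ by subdividing each edge of $H$ at most once (i.e., replacing some edges by paths of length 2 through new vertices). *)

From mathcomp Require Import all_boot all_order all_algebra.
Set Implicit Arguments. Unset Strict Implicit. Unset Printing Implicit Defensive.

Definition simple_graph (T : finType) (e : rel T) : Prop :=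
  (forall x y, e x y = e y x) /\ (forall x, ~~ e x x).

Definition edge_set (T : finType) (e : rel T) : {set {set T}} :=
  [set [set x; y] | x in T, y in T & e x y].

Definition nedges (T : finType) (e : rel T) : nat := #|edge_set e|.

Definition deg (T : finType) (e : rel T) (x : T) : nat := #|[set y | e x y]|.

(* minimum degree (meaningful when T is nonempty). *)
Definition mindeg (T : finType) (e : rel T) : nat :=
  \big[minn/#|T|]_(x : T) deg e x.

Definition spanning_subgraph (T : finType) (e' e : rel T) : Prop :=
  simple_graph e' /\ (forall x y, e' x y -> e x y).

Definition two_degenerate (T : finType) (e : rel T) : Prop :=
  forall (S : {set T}) (E : rel T),
    S != set0 -> (forall x y, E x y -> e x y) ->
    exists2 x, x \in S & #|[set y in S | E x y]| <= 2.

(* G (on W) contains a (<= 1)-subdivision of H (on V) as a subgraph: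
   branch vertices f injective; each edge uv of H is either an edge f u f v
   of G, or is subdivided by a vertex m u v = Some w of G outside the branch
   vertices, adjacent to f u and f v; distinct edges get distinct
   subdivision vertices. *)
Definition contains_le1_subdivision (V W : finType) (H : rel V) (G : rel W) : Prop :=
  exists (f : V -> W) (m : V -> V -> option W),
    injective f /\
    (forall u v, H u v -> m u v = m v u) /\
    (forall u v, H u v ->
       match m u v with
       | None => G (f u) (f v)
       | Some w => [&& G (f u) w, G w (f v) & w \notin codom f]
       end) /\
    (forall u v u' v' w, H u v -> H u' v' -> m u v = Some w -> m u' v' = Some w ->
       (u = u' /\ v = v') \/ (u = v' /\ v = u')).

From mathcomp Require Import all_boot all_algebra zify.

Set Implicit Arguments. Unset Strict Implicit. Unset Printing Implicit Defensive.

(* Embed the 2-degenerate spanning subgraph H' greedily, along a degeneracy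
   order: each new vertex has at most two already placed neighbours, and two
   vertices of G always have at least 2 delta - n common neighbours, which is
   more than the number of vertices used so far.  The remaining q - q' edges of
   H are then subdivided, again greedily, by distinct common neighbours of
   their end images lying outside the image of the embedding; the hypothesis
   2 delta - n >= q - q' + t - 2 leaves room for all of them. *)

Lemma set2_eq (T : finType) (u v x y : T) :
  [set u; v] = [set x; y] -> (u = x /\ v = y) \/ (u = y /\ v = x).
Proof.
move=> E.
have hu : u \in [set x; y] by rewrite -E set21.
have hv : v \in [set x; y] by rewrite -E set22.
have hx : x \in [set u; v] by rewrite E set21.
have hy : y \in [set u; v] by rewrite E set22.
move: hu hv hx hy => /set2P[]-> /set2P[]-> /set2P[]? /set2P[]?; subst; tauto.
Qed.

Lemma card_bigcup_le (I T : finType) (P : {pred I}) (B : I -> {set T}) :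
  #|\bigcup_(i | P i) B i| <= \sum_(i | P i) #|B i|.
Proof.
apply: (big_ind2 (fun (A : {set T}) n => #|A| <= n)) => // [|A1 n1 A2 n2 h1 h2].
  by rewrite cards0.
by apply: leq_trans (leq_add h1 h2); rewrite cardsU leq_subr.
Qed.

Lemma in_inj_update (T U : finType) (S : {set T}) (f : T -> U) x w :
  {in S :\ x &, injective f} -> w \notin f @: (S :\ x) ->
  {in S &, injective (fun y => if y == x then w else f y)}.
Proof.
move=> finj wf y z yS zS /=.
have img u : u \in S -> u != x -> f u \in f @: (S :\ x).
  by move=> uS ux; apply: imset_f; rewrite !inE ux.
case: (eqVneq y x) => [->|yx]; case: (eqVneq z x) => [->|zx] //.
- by move=> E; rewrite E img in wf.
- by move=> E; rewrite -E img in wf.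
- by apply: finj; rewrite !inE ?yx ?zx.
Qed.

Lemma injective_choice (I T : finType) (t0 : T) (A : I -> {set T})
    (F : {set I}) :
  {in F, forall i, #|F| <= #|A i|} ->
  exists g : I -> T, {in F &, injective g} /\ {in F, forall i, g i \in A i}.
Proof.
elim: {F}#|F| {-2}F (erefl #|F|) => [|k IH] F hF hA.
  have -> : F = set0 by apply/eqP; rewrite -cards_eq0 hF.
  by exists (fun _ => t0); split=> ?; rewrite inE.
have /set0Pn[i iF] : F != set0 by rewrite -card_gt0 hF.
have hF' : #|F :\ i| = k by move: hF; rewrite (cardsD1 i) iF => -[].
have [g [ginj gA]] : exists g : I -> T,
    {in F :\ i &, injective g} /\ {in F :\ i, forall j, g j \in A j}.
  apply: IH => // j /setD1P[_ jF]; apply: leq_trans (hA j jF).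
  by rewrite hF hF'.
have [t tA tg] : exists2 t, t \in A i & t \notin g @: (F :\ i).
  suff : 0 < #|A i :\: g @: (F :\ i)|.
    by rewrite card_gt0 => /set0Pn[t /setDP[]]; exists t.
  have := leq_imset_card g (F :\ i); have := hA i iF.
  rewrite hF' -(cardsID (g @: (F :\ i)) (A i)); have := subsetIr (A i) (g @: (F :\ i)).
  move/subset_leq_card; lia.
exists (fun j => if j == i then t else g j); split; first exact: in_inj_update.
by move=> j jF; case: (eqVneq j i) => [->|ji] //; apply: gA; rewrite !inE ji.
Qed.

Lemma mindeg_le_deg (T : finType) (e : rel T) x : mindeg e <= deg e x.
Proof.
rewrite /mindeg; have : x \in index_enum T by rewrite mem_index_enum.
elim: (index_enum T) => [|y s IH] //.
rewrite inE big_cons => /orP[/eqP->|/IH h]; first exact: geq_minl.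
exact: leq_trans (geq_minr _ _) h.
Qed.

Lemma deg_lt_card (T : finType) (e : rel T) x : ~~ e x x -> deg e x < #|T|.
Proof.
move=> exx; rewrite /deg -(cardsC [set y | e x y]) -addn1 leq_add2l.
by rewrite card_gt0; apply/set0Pn; exists x; rewrite !inE.
Qed.

Definition common_nbhd (T : finType) (e : rel T) (X : {set T}) : {set T} :=
  [set w | [forall a in X, e a w]].

Section CommonNeighbourhood.
Variables (W : finType) (G : rel W) (d : nat).
Hypothesis Girr : forall x, ~~ G x x.
Hypothesis Gdeg : forall x, d <= deg G x.

Lemma card_common_nbhd (X : {set W}) :
  #|W| <= #|common_nbhd G X| + #|X| * (#|W| - d).
Proof.
rewrite -{1}(cardsC (common_nbhd G X)) leq_add2l.
have -> : ~: common_nbhd G X = \bigcup_(a in X) ~: [set y | G a y].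
  apply/setP=> w; rewrite !inE negb_forall; apply/existsP/bigcupP.
    by case=> a; rewrite negb_imply => /andP[aX Gaw]; exists a; rewrite ?inE.
  by case=> a aX; rewrite !inE => Gaw; exists a; rewrite aX.
apply: leq_trans (card_bigcup_le _ _) _; rewrite -sum_nat_const.
by apply: leq_sum => a _; rewrite cardsCs setCK; exact: leq_sub2l (Gdeg a).
Qed.

(* No vertex of X is a common neighbour of X, so discarding Y only costs
   the vertices of Y :\: X. *)
Lemma card_common_nbhd_avoid (X Y : {set W}) :
  d < #|W| -> X \subset Y -> #|X| <= 2 ->
  2 * d + 2 <= #|common_nbhd G X :\: Y| + #|Y| + #|W|.
Proof.
move=> dW sXY hX.
have disj : #|common_nbhd G X :&: Y| + #|X| <= #|Y|.
  have noX : common_nbhd G X :&: Y :&: X = set0.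
    apply/setP=> w; rewrite !inE; apply/negP=> /andP[/andP[/forall_inP GXw _] wX].
    by have := GXw w wX; rewrite (negbTE (Girr w)).
  rewrite -[_ + _]subn0 -(cards0 W) -noX -cardsU subset_leq_card //.
  by rewrite subUset subsetIr.
have := card_common_nbhd X; have := cardsID Y (common_nbhd G X).
have : #|X| = 0 \/ #|X| = 1 \/ #|X| = 2 by lia.
by case=> [|[|]] hX'; rewrite hX' in disj *; lia.
Qed.

End CommonNeighbourhood.

Lemma two_degenerate_embedding (V W : finType) (H : rel V) (G : rel W) (w0 : W) :
  simple_graph H -> (forall x y, G x y = G y x) -> two_degenerate H ->
  (forall X Y : {set W}, X \subset Y -> #|X| <= 2 -> #|Y| < #|V| ->
     exists2 w, w \in common_nbhd G X & w \notin Y) ->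
  exists f : V -> W, injective f /\ (forall x y, H x y -> G (f x) (f y)).
Proof.
move=> [Hsym Hirr] Gsym Hdeg extend.
suff embed (S : {set V}) : exists f : V -> W,
    {in S &, injective f} /\ {in S &, forall x y, H x y -> G (f x) (f y)}.
  have [f [finj fH]] := embed [set: V].
  by exists f; split=> x y; [apply: finj | apply: fH]; rewrite inE.
elim: {S}#|S| {-2}S (erefl #|S|) => [|k IH] S hS.
  have -> : S = set0 by apply/eqP; rewrite -cards_eq0 hS.
  by exists (fun _ => w0); split=> ?; rewrite inE.
have S0 : S != set0 by rewrite -card_gt0 hS.
have [x xS hx] := Hdeg S H S0 (fun _ _ h => h).
have hS' : #|S :\ x| = k by move: hS; rewrite (cardsD1 x) xS => -[].
have [f [finj fH]] := IH _ hS'.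
set B := [set y in S :\ x | H x y].
have [w wB wS] : exists2 w, w \in common_nbhd G (f @: B) & w \notin f @: (S :\ x).
  apply: extend.
  - by apply: imsetS; apply/subsetP=> y; rewrite inE => /andP[].
  - apply: leq_trans (leq_imset_card _ _) (leq_trans _ hx); apply: subset_leq_card.
    by apply/subsetP=> y; rewrite !inE => /andP[/andP[_ ->] ->].
  - by apply: leq_ltn_trans (leq_imset_card _ _) _; rewrite hS' -hS; apply: max_card.
exists (fun y => if y == x then w else f y); split; first exact: in_inj_update.
have GB u : u \in S -> u != x -> H x u -> G (f u) w.
  move=> uS ux Hxu; move: wB; rewrite inE => /forall_inP; apply.
  by apply: imset_f; rewrite !inE ux uS Hxu.
move=> y z yS zS /=; case: (eqVneq y x) => [->|yx]; case: (eqVneq z x) => [->|zx].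
- by rewrite (negbTE (Hirr x)).
- by move=> Hxz; rewrite Gsym; apply: GB.
- by move=> Hyx; apply: GB => //; rewrite Hsym.
- by apply: fH; rewrite !inE ?yx ?zx.
Qed.

Lemma mem_edge_set (T : finType) (e : rel T) x y :
  (forall x y, e x y = e y x) -> ([set x; y] \in edge_set e) = e x y.
Proof.
move=> esym; apply/imset2P/idP=> [[a b _]|exy]; last by exists x y; rewrite ?inE.
rewrite inE => /andP[_ eab] /set2_eq[[-> ->]|[-> ->]] //.
by rewrite esym.
Qed.

Lemma card_edge_set (T : finType) (e : rel T) E : E \in edge_set e -> #|E| <= 2.
Proof. by case/imset2P=> x y _ _ ->; rewrite cards2; case: (x != y). Qed.

Lemma edge_setS (T : finType) (e' e : rel T) :
  (forall x y, e' x y -> e x y) -> edge_set e' \subset edge_set e.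
Proof.
move=> e'e; apply/subsetP=> E /imset2P[x y _]; rewrite inE => /andP[_ e'xy] ->.
by apply/imset2P; exists x y; rewrite ?inE ?e'e.
Qed.

Lemma le1_subdivision_of_embedding (V W : finType) (H H' : rel V) (G : rel W)
    (f : V -> W) (g : {set V} -> W) :
  (forall x y, H x y = H y x) -> (forall x y, H' x y = H' y x) ->
  (forall x y, G x y = G y x) ->
  injective f -> (forall x y, H' x y -> G (f x) (f y)) ->
  {in edge_set H :\: edge_set H' &, injective g} ->
  {in edge_set H :\: edge_set H', forall e,
     g e \in common_nbhd G (f @: e) :\: f @: [set: V]} ->
  contains_le1_subdivision H G.
Proof.
move=> Hsym H'sym Gsym finj fH' ginj gA.
have newE u v : H u v -> ~~ H' u v -> [set u; v] \in edge_set H :\: edge_set H'.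
  by move=> Huv H'uv; rewrite inE !mem_edge_set ?H'uv ?Huv.
exists f, (fun u v => if H' u v then None else Some (g [set u; v])).
split=> //; split; first by move=> u v _; rewrite H'sym setUC.
split=> [u v Huv | u v u' v' w Huv Hu'v'].
  case: ifP => H'uv; first exact: fH'.
  have /setDP[] := gA _ (newE _ _ Huv (negbT H'uv)).
  rewrite inE => /forall_inP gN gf.
  rewrite gN ?imset_f ?set21 //= Gsym gN ?imset_f ?set22 //=.
  by apply: contra gf => /codomP[x ->]; apply: imset_f; rewrite inE.
case: ifP => // H'uv [<-]; case: ifP => // H'u'v' [E].
have /set2_eq := ginj _ _ (newE _ _ Huv (negbT H'uv)) (newE _ _ Hu'v' (negbT H'u'v')) (esym E).
tauto.
Qed.

Theorem lemma13 (V W : finType) (H H' : rel V) (G : rel W) :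
  simple_graph H -> simple_graph G ->
  (1 <= #|V|)%N -> (1 <= #|W|)%N ->
  spanning_subgraph H' H -> two_degenerate H' ->
  ((nedges H)%:Z - (nedges H')%:Z + (#|V|)%:Z - 2 <=
     2 * (mindeg G)%:Z - (#|W|)%:Z)%R ->
  contains_le1_subdivision H G.
Proof.
move=> [Hsym _] [Gsym Girr] _ /card_gt0P[w0 _] [H'simple H'H] H'deg budget.
set d := mindeg G.
have Gdeg x : d <= deg G x := mindeg_le_deg G x.
have dW : d < #|W| := leq_ltn_trans (Gdeg w0) (deg_lt_card (Girr w0)).
set Enew := edge_set H :\: edge_set H'.
have room : #|Enew| + #|V| + #|W| <= 2 * d + 2.
  have := subset_leq_card (edge_setS H'H).
  by rewrite cardsDS ?edge_setS //; move: budget; rewrite /nedges /d; lia.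
have extend (X Y : {set W}) : X \subset Y -> #|X| <= 2 -> #|Y| < #|V| ->
    exists2 w, w \in common_nbhd G X & w \notin Y.
  move=> sXY hX hY; have : 0 < #|common_nbhd G X :\: Y|.
    by have := card_common_nbhd_avoid Girr Gdeg dW sXY hX; lia.
  by case/card_gt0P=> w /setDP[]; exists w.
have [f [finj fH']] := two_degenerate_embedding w0 H'simple Gsym H'deg extend.
pose A (e : {set V}) := common_nbhd G (f @: e) :\: f @: [set: V].
have enough : {in Enew, forall e, #|Enew| <= #|A e|}.
  move=> e /setDP[eH _].
  have := card_common_nbhd_avoid Girr Gdeg dW (imsetS f (subsetT e))
    (leq_trans (leq_imset_card f e) (card_edge_set eH)).
  by have := leq_imset_card f [set: V]; rewrite cardsT /A; lia.
have [g [ginj gA]] := injective_choice w0 enough.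
exact: (le1_subdivision_of_embedding Hsym H'simple.1 Gsym finj fH' ginj gA).
Qed.
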